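(* Let $\mathbb{K}$ be a field and $\Delta$ a $d$-dimensional simplicial complex on vertex set $[n]$ such that $\tilde H_d(\Delta;\mathbb{K})\ne0$. Set $R=\mathbb{K}[x_1,\dots,x_n]$, $L=x_1+\dots+x_n$ and $J=I_\Delta+(x_1^{d+2},\dots,x_n^{d+2})$. Then the multiplication map $$\times L:\Big(\frac{R}{J}\Big)_{\binom{d+2}{2}-1}\to\Big(\frac{R}{J}\Big)_{\binom{d+2}{2}}$$ is not surjective.
   Context: $I_\Delta=(\prod_{i\in\tau}x_i:\tau\subseteq[n],\tau\notin\Delta)$ is the Stanley–Reisner ideal of $\Delta$. *)

From HB Require Import structures.
From mathcomp Require Import all_boot all_order all_algebra.
From mathcomp Require Import mpoly.
Set Implicit Arguments. Unset Strict Implicit. Unset Printing Implicit Defensive.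
Import Order.TTheory GRing.Theory.
Local Open Scope ring_scope.

Definition simplicial_complex (n : nat) (D : {set {set 'I_n}}) : Prop :=
  [/\ set0 \in D,
      (forall s t : {set 'I_n}, t \in D -> s \subset t -> s \in D) &
      (forall i : 'I_n, [set i] \in D)].

Definition has_dim (n : nat) (D : {set {set 'I_n}}) (d : nat) : Prop :=
  (exists2 s, s \in D & #|s| = d.+1) /\ (forall s, s \in D -> (#|s| <= d.+1)%N).

(* Reduced simplicial k-chains with coefficients in K: functions on faces,
   supported on the faces of D of cardinality k+1 (k-dimensional faces;
   for k = -1 the empty face, which makes the chain complex augmented). *)
Definition is_chain (K : fieldType) (n : nat) (D : {set {set 'I_n}}) (k : nat)
  (c : {set 'I_n} -> K) : Prop :=
  forall s, ~~ ((s \in D) && (#|s| == k.+1)) -> c s = 0.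

(* Simplicial boundary, faces oriented by the natural order of vertices:
   d[v_0<...<v_k] = sum_i (-1)^i [v_0..^v_i..v_k]. *)
Definition boundary (K : fieldType) (n : nat) (c : {set 'I_n} -> K)
  (t : {set 'I_n}) : K :=
  \sum_(v : 'I_n | v \notin t)
     (-1) ^+ #|[set u in t | (u < v)%N]| * c (v |: t).

Definition reduced_homology_nonzero (K : fieldType) (n : nat)
  (D : {set {set 'I_n}}) (k : nat) : Prop :=
  exists z : {set 'I_n} -> K,
    [/\ is_chain D k z,
        (forall t, boundary z t = 0) &
        ~ (exists2 w : {set 'I_n} -> K, is_chain D k.+1 w &
             forall s, z s = boundary w s)].

Definition sqfree_mono (K : fieldType) (n : nat) (t : {set 'I_n}) : {mpoly K[n]} :=
  \prod_(i in t) 'X_i.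

Definition in_J (K : fieldType) (n : nat) (D : {set {set 'I_n}}) (e : nat)
  (p : {mpoly K[n]}) : Prop :=
  exists (a : {set 'I_n} -> {mpoly K[n]}) (b : 'I_n -> {mpoly K[n]}),
    p = \sum_(t : {set 'I_n} | t \notin D) a t * sqfree_mono K t
        + \sum_(i : 'I_n) b i * 'X_i ^+ e.

Definition Lsum (K : fieldType) (n : nat) : {mpoly K[n]} := \sum_(i : 'I_n) 'X_i.

(* Surjectivity of x L : (R/J)_k -> (R/J)_{k+1}, J homogeneous: every
   homogeneous f of degree k+1 is congruent mod J to L*g, g homogeneous of
   degree k. *)
Definition mulL_surjective (K : fieldType) (n : nat) (D : {set {set 'I_n}})
  (e k : nat) : Prop :=
  forall f : {mpoly K[n]}, f \is k.+1.-homog ->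
    exists2 g : {mpoly K[n]}, g \is k.-homog & in_J D e (f - Lsum K n * g).

From HB Require Import structures.
From mathcomp Require Import all_boot all_order all_algebra.
From mathcomp Require Import fingroup perm mpoly.
Set Implicit Arguments. Unset Strict Implicit. Unset Printing Implicit Defensive.
Import Order.TTheory GRing.Theory.
Local Open Scope ring_scope.

(* A d-cycle z that is not a boundary is nonzero on some face s.  Let Phi be the
   linear form on K[x_1..x_n] with Phi(x^m) = z(supp m) * sgn(sigma) when the
   exponents of x^m, read along supp m in increasing vertex order, form a
   permutation sigma of 1..d+1, and Phi(x^m) = 0 otherwise.  Phi kills
   x_i^(d+2) R (exponents too large) and I_Delta (z lives on faces of Delta).
   It also kills L R: in Phi(L x^m) = sum_i Phi(x^(m+e_i)) the terms with
   m_i = 0 add up to (dz)(supp m) times a common sign, hence to 0, while the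
   terms with m_i <> 0 cancel in pairs {i, j} with m_i = m_j, whose exponent
   permutations differ by a transposition.  The monomial with exponents
   1..d+1 on s has degree binom(d+2,2) and Phi-value z(s) <> 0, so it is not
   in L R + J. *)

Lemma nth_cat_cons_bump (T : Type) (x0 y : T) s1 s2 k :
  nth x0 (s1 ++ y :: s2) (bump (size s1) k) = nth x0 (s1 ++ s2) k.
Proof.
rewrite /bump !nth_cat; case: (ltnP k (size s1)) => [lt_k|le_k].
  by rewrite add0n lt_k.
by rewrite add1n ltnNge (leq_trans le_k (leqnSn _)) /= subSn.
Qed.

Lemma enum_ord_split n (i : 'I_n) : exists s1 s2,
  [/\ enum 'I_n = s1 ++ i :: s2, all (fun x : 'I_n => x < i)%N s1 &
      all (fun x : 'I_n => i < x)%N s2].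
Proof.
have lt_i : (i < size (enum 'I_n))%N by rewrite size_enum_ord.
exists (take i (enum 'I_n)), (drop i.+1 (enum 'I_n)); split.
- rewrite -{1}(cat_take_drop i (enum 'I_n)) (drop_nth i lt_i).
  by congr (_ ++ _ :: _); apply: val_inj; rewrite /= nth_enum_ord.
- apply/allP => x x_take; have := map_f val x_take.
  rewrite map_take val_enum_ord take_iota mem_iota add0n => /leq_trans; apply.
  exact: geq_minl.
- apply/allP => x x_drop; have := map_f val x_drop.
  by rewrite map_drop val_enum_ord drop_iota mem_iota add0n => /andP[].
Qed.

Lemma sum_paired_opposites (I : finType) (V : zmodType) (R : rel I) (F : I -> V) :
  irreflexive R -> (forall i j, R i j = R j i) ->
  (forall i j, R i j -> F j = - F i) ->
  (forall i, F i != 0 -> #|[pred j | R i j]| = 1%N) ->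
  \sum_i F i = 0.
Proof.
move=> irrR symR oppF partner.
pose before (i j : I) := (enum_rank i < enum_rank j)%N.
have -> : \sum_i F i = \sum_i \sum_(j | R i j) F i.
  apply: eq_bigr => i _; rewrite sumr_const.
  by have [->|/partner ->] := eqVneq (F i) 0; rewrite ?mul0rn.
rewrite (eq_bigr _ (fun i _ => bigID (before i) _ _)) big_split /=.
rewrite [X in _ + X](exchange_big_dep predT) //=.
have after j i : R i j && ~~ before i j = R j i && before j i.
  rewrite symR; have [-> | neq_ij] := eqVneq i j; first by rewrite irrR.
  have /negPf rank_neq : enum_rank j != enum_rank i.
    by apply: contraNneq neq_ij => /enum_rank_inj ->.
  by rewrite /before -leqNgt leq_eqVlt val_eqE rank_neq.
under [X in _ + X]eq_bigr do rewrite (eq_bigl _ _ (after _)).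
rewrite -big_split big1 // => i _; rewrite -big_split big1 // => j /andP[Rij _].
by rewrite /= (oppF _ _ Rij) addrN.
Qed.

Section MonomialExponents.
Variable n : nat.
Implicit Types (m : 'X_{1..n}) (i : 'I_n).

Definition mnm_supp m : {set 'I_n} := [set x | m x != 0%N].
Definition mnm_suppseq m : seq 'I_n := [seq x <- enum 'I_n | m x != 0%N].
Definition mnm_exps m : seq nat := [seq m x | x <- mnm_suppseq m].

Lemma mem_mnm_suppseq m x : (x \in mnm_suppseq m) = (m x != 0%N).
Proof. by rewrite mem_filter mem_enum andbT. Qed.

Lemma mnm_suppseq_uniq m : uniq (mnm_suppseq m).
Proof. exact/filter_uniq/enum_uniq. Qed.

Lemma size_mnm_exps m : size (mnm_exps m) = #|mnm_supp m|.
Proof.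
rewrite size_map -(card_uniqP (mnm_suppseq_uniq m)).
by apply: eq_card => x; rewrite mem_mnm_suppseq inE.
Qed.

Lemma mdeg_mnm_exps m : mdeg m = sumn (mnm_exps m).
Proof.
rewrite mdegE (bigID (fun x => m x == 0%N)) /= big1 => [|x /eqP //].
by rewrite add0n sumnE big_map big_filter big_enum_cond.
Qed.

Lemma mnm_exps_mem m i : m i != 0%N -> m i \in mnm_exps m.
Proof. by move=> mi_neq0; rewrite map_f ?mem_mnm_suppseq. Qed.

Lemma mnm_supp_addU_fresh m i : m i = 0%N -> mnm_supp (m + U_(i)) = i |: mnm_supp m.
Proof.
move=> mi0; apply/setP => x; rewrite !inE mnmDE mnm1E.
by case: (eqVneq i x) => [<-|_]; rewrite ?mi0 ?addn0.
Qed.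

Lemma mnm_suppseq_addU_old m i : m i != 0%N -> mnm_suppseq (m + U_(i)) = mnm_suppseq m.
Proof.
move=> mi_neq0; apply: eq_filter => x; rewrite mnmDE mnm1E.
by case: (eqVneq i x) => [<-|_]; rewrite ?addn1 ?addn0 ?mi_neq0.
Qed.

Lemma mnm_supp_addU_old m i : m i != 0%N -> mnm_supp (m + U_(i)) = mnm_supp m.
Proof.
move=> mi_neq0; apply/setP => x; rewrite !inE -!mem_mnm_suppseq.
by rewrite mnm_suppseq_addU_old.
Qed.

Lemma mnm_exps_addU_fresh m i : m i = 0%N -> exists s1 s2,
  [/\ mnm_exps (m + U_(i)) = s1 ++ 1%N :: s2, mnm_exps m = s1 ++ s2 &
      size s1 = #|[set u in mnm_supp m | (u < i)%N]|].
Proof.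
move=> mi0; have [t1 [t2 [enumE lt_t1 gt_t2]]] := enum_ord_split i.
have addU_off t : all (fun x => x != i) t ->
    [seq (m + U_(i))%MM x | x <- t & (m + U_(i))%MM x != 0%N] =
    [seq m x | x <- t & m x != 0%N].
  move=> /allP neq_i; have eq_m : {in t, (m + U_(i))%MM =1 m}.
    by move=> x /neq_i x_neq_i; rewrite mnmDE mnm1E eq_sym (negPf x_neq_i) addn0.
  rewrite (@eq_in_filter _ _ (fun x => m x != 0%N)) => [|x /eq_m -> //].
  by apply/eq_in_map => x; rewrite mem_filter => /andP[_ /eq_m].
have neq_t1 : all (fun x => x != i) t1.
  by apply: sub_all lt_t1 => x; apply: contraTneq => ->; rewrite ltnn.
have neq_t2 : all (fun x => x != i) t2.
  by apply: sub_all gt_t2 => x; apply: contraTneq => ->; rewrite ltnn.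
exists [seq m x | x <- t1 & m x != 0%N], [seq m x | x <- t2 & m x != 0%N].
have addU_i : (m + U_(i))%MM i = 1%N by rewrite mnmDE mnm1E eqxx mi0.
rewrite /mnm_exps /mnm_suppseq enumE !filter_cat /= addU_i mi0 /= !map_cat /= addU_i.
rewrite addU_off // addU_off //; split=> //.
transitivity (count [pred u | (m u != 0%N) && (u < i)%N] (enum 'I_n)).
  rewrite size_map size_filter enumE count_cat /= ltnn andbF add0n.
  rewrite (@eq_in_count _ _ pred0 t2) ?count_pred0 ?addn0 => [|x /(allP gt_t2) gt_x].
    by apply: eq_in_count => x /(allP lt_t1) /= ->; rewrite andbT.
  by rewrite /= ltnNge (ltnW gt_x) andbF.
rewrite -size_filter -(card_uniqP (filter_uniq _ (enum_uniq _))).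
by apply: eq_card => x; rewrite mem_filter mem_enum !inE andbT.
Qed.

End MonomialExponents.

Section PositionMatrix.
Variable K : fieldType.

(* For [size s = k], [\det (pos_mx k s)] is the sign of [s] if [s] is a
   permutation of [1..k], and 0 otherwise. *)
Definition pos_mx k (s : seq nat) : 'M[K]_k :=
  \matrix_(r, c) ((nth 0%N s r == c.+1)%:R).

Lemma pos_mx_perm_iota k s :
  size s = k -> \det (pos_mx k s) != 0 -> perm_eq s (iota 1 k).
Proof.
move=> size_s det_neq0.
have s_uniq : uniq s.
  apply/(uniqPn 0%N) => -[r1 [r2 [lt_r12 lt_r2 eq_r12]]]; move/eqP: det_neq0; apply.
  rewrite size_s in lt_r2.
  apply: (@determinant_alternate _ _ _ (Ordinal (ltn_trans lt_r12 lt_r2)) (Ordinal lt_r2)).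
    by rewrite -val_eqE /= ltn_eqF.
  by move=> c; rewrite !mxE /= eq_r12.
have s_range : {subset s <= iota 1 k}.
  move=> v s_v; rewrite mem_iota add1n; apply: contraTT det_neq0 => v_out.
  have lt_r : (index v s < k)%N by rewrite -size_s index_mem.
  rewrite negbK (expand_det_row _ (Ordinal lt_r)) big1 // => c _.
  rewrite mxE /= nth_index // (_ : (v == c.+1) = false) ?mul0r //.
  by apply: contraNF v_out => /eqP ->; exact: ltn_ord.
have size_iota_s : (size (iota 1 k) <= size s)%N by rewrite size_iota size_s.
have [_ eq_s] := uniq_min_size s_uniq s_range size_iota_s.
exact: uniq_perm s_uniq (iota_uniq _ _) eq_s.
Qed.

Lemma det_pos_mx_swap k (a b : 'I_k) s s' : a != b ->
  (forall r : 'I_k, nth 0%N s' r = nth 0%N s (tperm a b r)) ->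
  \det (pos_mx k s') = - \det (pos_mx k s).
Proof.
move=> neq_ab eq_s'.
have -> : pos_mx k s' = xrow a b (pos_mx k s).
  by apply/matrixP => r c; rewrite !mxE eq_s'.
by rewrite xrowE det_mulmx det_perm odd_tperm neq_ab expr1 mulN1r.
Qed.

Lemma det_pos_mx_insert1 k s1 s2 : (size s1 <= k)%N ->
  \det (pos_mx k.+1 (s1 ++ 1%N :: s2)) =
  (-1) ^+ size s1 * \det (pos_mx k (map predn (s1 ++ s2))).
Proof.
move=> le_s1; have lt_s1 : (size s1 < k.+1)%N by [].
have row_s1 c : pos_mx k.+1 (s1 ++ 1%N :: s2) (Ordinal lt_s1) c = (c == ord0)%:R.
  by rewrite mxE /= nth_cat ltnn subnn /= eqSS -val_eqE eq_sym.
rewrite (expand_det_row _ (Ordinal lt_s1)) (bigD1 ord0) //= big1 => [|c c_neq0].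
  rewrite row_s1 eqxx mul1r addr0 /cofactor addn0; congr (_ * \det _).
  apply/matrixP => r c; rewrite !mxE /= nth_cat_cons_bump.
  have [lt_r|le_r] := ltnP r (size (s1 ++ s2)).
    by rewrite (nth_map 0%N) //; case: nth.
  by rewrite !nth_default ?size_map.
by rewrite row_s1 (negPf c_neq0) mul0r.
Qed.

End PositionMatrix.

Section CycleFunctional.
Variables (K : fieldType) (n d : nat) (D : {set {set 'I_n}}) (z : {set 'I_n} -> K).
Hypothesis z_chain : is_chain D d z.
Hypothesis z_cycle : forall t, boundary z t = 0.
Hypothesis D_closed : forall s t : {set 'I_n}, t \in D -> s \subset t -> s \in D.
Implicit Types (m : 'X_{1..n}) (i j : 'I_n).

Definition phi m : K := z (mnm_supp m) * \det (pos_mx K d.+1 (mnm_exps m)).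

Lemma chain_face s : z s != 0 -> s \in D /\ #|s| = d.+1.
Proof.
move=> zs_neq0; case: (boolP ((s \in D) && (#|s| == d.+1))) => [/andP[-> /eqP ->]|] //.
by move/z_chain => zs0; rewrite zs0 eqxx in zs_neq0.
Qed.

Lemma phi_perm_iota m : phi m != 0 -> perm_eq (mnm_exps m) (iota 1 d.+1).
Proof.
rewrite mulf_eq0 negb_or => /andP[zS_neq0 det_neq0].
apply: pos_mx_perm_iota det_neq0.
by rewrite size_mnm_exps; case: (chain_face zS_neq0).
Qed.

Lemma phi_exp_le m i : phi m != 0 -> (m i <= d.+1)%N.
Proof.
move=> /phi_perm_iota/perm_mem exps_iota.
have [->|/mnm_exps_mem] := eqVneq (m i) 0%N; first by [].
by rewrite exps_iota mem_iota add1n => /andP[].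
Qed.

Lemma sum_phi_addU_fresh m : \sum_(i | m i == 0%N) phi (m + U_(i)) = 0.
Proof.
have [card_S|card_S] := eqVneq #|mnm_supp m| d; last first.
  apply: big1 => i /eqP mi0; rewrite /phi mnm_supp_addU_fresh // z_chain ?mul0r //.
  by rewrite cardsU1 inE mi0 eqxx /= add1n eqSS (negPf card_S) andbF.
transitivity (\sum_(i | m i == 0%N)
   (-1) ^+ #|[set u in mnm_supp m | (u < i)%N]| * z (i |: mnm_supp m) *
   \det (pos_mx K d (map predn (mnm_exps m)))).
  apply: eq_bigr => i /eqP mi0.
  have [s1 [s2 [exps_addU exps_m size_s1]]] := mnm_exps_addU_fresh mi0.
  rewrite /phi mnm_supp_addU_fresh // exps_addU det_pos_mx_insert1 -?exps_m ?size_s1.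
    by rewrite mulrCA mulrA.
  by rewrite -size_s1 -card_S -size_mnm_exps exps_m size_cat leq_addr.
rewrite -mulr_suml; have -> : \sum_(i | m i == 0%N)
    (-1) ^+ #|[set u in mnm_supp m | (u < i)%N]| * z (i |: mnm_supp m) =
    boundary z (mnm_supp m).
  by apply: eq_bigl => i; rewrite inE negbK.
by rewrite z_cycle mul0r.
Qed.

Lemma phi_addU_swap m i j : i != j -> m i = m j -> m i != 0%N ->
  phi (m + U_(i)) = - phi (m + U_(j)).
Proof.
move=> neq_ij eq_mij mi_neq0; have mj_neq0 : m j != 0%N by rewrite -eq_mij.
rewrite /phi !mnm_supp_addU_old // -mulrN.
have [->|zS_neq0] := eqVneq (z (mnm_supp m)) 0; first by rewrite !mul0r.
congr (_ * _); set S := mnm_suppseq m.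
have size_S : size S = d.+1.
  by rewrite -(size_map m) size_mnm_exps; case: (chain_face zS_neq0).
have S_i : i \in S by rewrite mem_mnm_suppseq.
have S_j : j \in S by rewrite mem_mnm_suppseq.
have lt_a : (index i S < d.+1)%N by rewrite -size_S index_mem.
have lt_b : (index j S < d.+1)%N by rewrite -size_S index_mem.
have neq_ab : Ordinal lt_a != Ordinal lt_b.
  apply: contra neq_ij; rewrite -val_eqE /= => /eqP eq_idx.
  by rewrite -(nth_index i S_i) eq_idx nth_index.
have lt_S (r : 'I_d.+1) : (r < size S)%N by rewrite size_S.
apply: (det_pos_mx_swap _ neq_ab) => r.
rewrite /mnm_exps !mnm_suppseq_addU_old // -/S.
rewrite !(nth_map i) // !mnmDE !mnm1E.
case: tpermP => [->|->|neq_ra neq_rb] /=; rewrite ?nth_index //.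
- by rewrite !eqxx eq_mij.
- by rewrite (negPf neq_ij) eq_sym (negPf neq_ij) eq_mij.
have neq_i : i != nth i S r.
  apply/eqP => eq_i; apply: neq_ra; apply/val_inj.
  by rewrite /= eq_i index_uniq ?mnm_suppseq_uniq.
have neq_j : j != nth i S r.
  apply/eqP => eq_j; apply: neq_rb; apply/val_inj.
  by rewrite /= eq_j index_uniq ?mnm_suppseq_uniq.
by rewrite (negPf neq_i) (negPf neq_j).
Qed.

Lemma phi_addU_partner m i : m i != 0%N -> phi (m + U_(i)) != 0 ->
  #|[pred j | (i != j) && (m i == m j)]| = 1%N.
Proof.
move=> mi_neq0 phi_neq0; have /seq.permP exps_iota := phi_perm_iota phi_neq0.
have lt_mi : (m i < d.+1)%N.
  by have := phi_exp_le i phi_neq0; rewrite mnmDE mnm1E eqxx addn1.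
transitivity (count_mem (m i) (mnm_exps (m + U_(i)))); last first.
  by rewrite exps_iota count_uniq_mem ?iota_uniq // mem_iota add1n lt0n mi_neq0 ltnW.
rewrite /mnm_exps mnm_suppseq_addU_old // /mnm_suppseq enumT count_map count_filter.
rewrite cardE /enum_mem size_filter; apply: eq_count => x /=; rewrite mnmDE mnm1E.
have [<-|neq_ix] := eqVneq i x; rewrite inE /=.
  by rewrite eqxx /= addn1 eqn_leq ltnn.
by rewrite neq_ix addn0 eq_sym; case: eqP => // ->.
Qed.

Lemma sum_phi_addU_old m : \sum_(i | m i != 0%N) phi (m + U_(i)) = 0.
Proof.
rewrite big_mkcond /=.
apply: (sum_paired_opposites (R := fun i j => [&& m i != 0%N, i != j & m i == m j])).
- by move=> i; rewrite eqxx andbF.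
- move=> i j; rewrite [j == i]eq_sym [m j == m i]eq_sym.
  by case: (m i =P m j) => [->|]; rewrite ?andbF.
- move=> i j /and3P[mi_neq0 neq_ij /eqP eq_mij]; rewrite -eq_mij mi_neq0.
  by rewrite (phi_addU_swap neq_ij) ?opprK.
- move=> i; case: ifP => [mi_neq0|_]; last by rewrite eqxx.
  by move=> /(phi_addU_partner mi_neq0) <-; apply: eq_card => j; rewrite !inE.
Qed.

Lemma sum_phi_addU m : \sum_i phi (m + U_(i)) = 0.
Proof.
by rewrite (bigID (fun i => m i == 0%N)) /= sum_phi_addU_fresh sum_phi_addU_old addr0.
Qed.

Definition Phi (p : {mpoly K[n]}) : K := \sum_(m <- msupp p) p@_m * phi m.

Lemma PhiE p r : uniq r -> {subset msupp p <= r} ->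
  Phi p = \sum_(m <- r) p@_m * phi m.
Proof.
move=> r_uniq supp_r; rewrite [RHS](bigID (mem (msupp p))) /=.
rewrite [X in _ = _ + X]big1 => [|m /memN_msupp_eq0 ->]; last by rewrite mul0r.
rewrite addr0 -big_filter; apply/perm_big/uniq_perm; rewrite ?filter_uniq ?msupp_uniq //.
by move=> m; rewrite mem_filter andb_idr //; apply: supp_r.
Qed.

Lemma Phi_is_scalar : scalar Phi.
Proof.
move=> c p q; set r := undup (msupp p ++ msupp q ++ msupp (c *: p + q)).
have sub_r s : {subset msupp s <= r} -> Phi s = \sum_(m <- r) s@_m * phi m.
  exact: PhiE (undup_uniq _).
rewrite !sub_r => [|m|m|m]; rewrite ?mem_undup ?mem_cat; last 3 first.
  1-3: by move=> ->; rewrite ?orbT.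
rewrite mulr_sumr -big_split; apply: eq_bigr => m _.
by rewrite /= mcoeffD mcoeffZ mulrDl -mulrA.
Qed.

HB.instance Definition _ := GRing.isLinear.Build K {mpoly K[n]} K *%R Phi Phi_is_scalar.

Lemma PhiX m : Phi 'X_[m] = phi m.
Proof. by rewrite /Phi msuppX big_seq1 mcoeffX eqxx mul1r. Qed.

Lemma Phi_mulX q m0 : Phi (q * 'X_[m0]) = \sum_(m <- msupp q) q@_m * phi (m + m0).
Proof.
rewrite {1}(mpolyE q) mulr_suml raddf_sum; apply: eq_bigr => m _.
by rewrite -scalerAl -mpolyXD /= linearZ /= PhiX.
Qed.

Lemma Phi_mulL g : Phi (Lsum K n * g) = 0.
Proof.
rewrite mulrC /Lsum mulr_sumr raddf_sum (eq_bigr _ (fun i _ => Phi_mulX g U_(i))).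
by rewrite exchange_big big1 // => m _; rewrite -mulr_sumr sum_phi_addU mulr0.
Qed.

Lemma Phi_J p : in_J D d.+2 p -> Phi p = 0.
Proof.
move=> [a [b ->]]; rewrite raddfD !raddf_sum /= !big1 ?addr0 // => [i _|t tD].
  rewrite mpolyXn Phi_mulX; apply: big1 => m _.
  have [->|/(phi_exp_le i)] := eqVneq (phi (m + U_(i) *+ d.+2)) 0.
    by rewrite mulr0.
  by rewrite mnmDE mulmnE mnm1E eqxx mul1n addnS ltnNge leq_addl.
rewrite /sqfree_mono mprodXE Phi_mulX; apply: big1 => m _.
rewrite /phi z_chain ?mul0r ?mulr0 //; apply: contra tD => /andP[supp_D _].
apply: D_closed supp_D _; apply/subsetP => x xt.
by rewrite inE mnmDE mnm_sumE (bigD1 x) //= mnm1E eqxx addnCA add1n.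
Qed.

Lemma phi_staircase s : z s != 0 -> exists2 m, mdeg m = 'C(d.+2, 2) & phi m != 0.
Proof.
move=> zs_neq0; have [_ card_s] := chain_face zs_neq0.
have [x0 _] : {x0 : 'I_n | x0 \in s} by apply/sigW/set0Pn; rewrite -card_gt0 card_s.
pose m := [multinom (if i \in s then (index i (enum s)).+1 else 0%N) | i < n].
have supp_m : mnm_supp m = s.
  by apply/setP => i; rewrite inE mnmE; case: (i \in s).
have exps_m : mnm_exps m = iota 1 d.+1.
  have suppseq_m : mnm_suppseq m = enum s.
    rewrite /mnm_suppseq enumT /enum_mem; apply: eq_filter => i; rewrite mnmE.
    by rewrite -[mem s i]/(i \in s); case: (i \in s).
  have size_s : size (enum s) = d.+1 by rewrite -cardE.
  apply: (@eq_from_nth _ 0%N); rewrite /mnm_exps suppseq_m ?size_map ?size_iota //.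
  move=> k lt_k.
  have s_k : nth x0 (enum s) k \in s by rewrite -mem_enum mem_nth.
  by rewrite (nth_map x0) // mnmE s_k index_uniq ?enum_uniq // nth_iota -?size_s.
exists m.
  by rewrite mdeg_mnm_exps exps_m sumnE -bin2_sum big_ltn // add0n /index_iota subn1.
rewrite /phi supp_m exps_m mulf_neq0 // (_ : pos_mx K d.+1 (iota 1 d.+1) = 1%:M).
  by rewrite det1 oner_neq0.
by apply/matrixP => r c; rewrite !mxE nth_iota // add1n eqSS.
Qed.

End CycleFunctional.

Theorem proposition5p9 (K : fieldType) (n d : nat) (D : {set {set 'I_n}}) :
  simplicial_complex D -> has_dim D d ->
  reduced_homology_nonzero K D d ->
  ~ mulL_surjective K D d.+2 ('C(d.+2, 2) - 1).
Proof.
move=> [_ D_closed _] _ [z [z_chain z_cycle z_not_boundary]] surj.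
have [s zs_neq0] : {s | z s != 0}.
  case: (pickP (fun s => z s != 0)) => [s zs_neq0|z0]; first by exists s.
  exfalso; apply: z_not_boundary; exists (fun _ => 0) => [//|t].
  rewrite /boundary big1 => [|v _]; last by rewrite mulr0.
  by apply/eqP; rewrite -[_ == _]negbK z0.
have [m deg_m phi_m] := phi_staircase z_chain zs_neq0.
have homog_m : ('X_[m] : {mpoly K[n]}) \is ('C(d.+2, 2) - 1).+1.-homog.
  by rewrite dhomogX /= deg_m subn1 prednK ?bin_gt0.
have [g _ J_Xm] := surj _ homog_m.
move: phi_m; rewrite -(PhiX d z) -(subrK (Lsum K n * g) 'X_[m]) raddfD /=.
by rewrite (Phi_mulL z_chain z_cycle) addr0 (Phi_J z_chain D_closed J_Xm) eqxx.
Qed.
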